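(* Let $\Omega\subset\mathbb R^n$ be a $C^2$ domain, $x\in\partial\Omega$, and let $\mathbf e_1(x),\dots,\mathbf e_{n-1}(x)$ be an orthonormal eigenbasis of the shape operator of $\partial\Omega$ at $x$ with principal curvatures $\kappa_1(x),\dots,\kappa_{n-1}(x)$, i.e. $\partial_{\mathbf e_j(x)}\nu(x)=\kappa_j(x)\mathbf e_j(x)$. Then for every $u\in F$ with $\mathbb B(\nu(x))u=0$, $$\langle u,L_B(x)u\rangle=\sum_{j=1}^{n-1}\kappa_j(x)\,|\mathbb B(\mathbf e_j(x))u|^2 .$$
   Context: $E,F$ are finite-dimensional real or complex inner product spaces ($\langle\cdot,\cdot\rangle$ the real part of the inner product in the complex case). $B_1,\dots,B_n\in\mathcal L(F,E)$, $\mathbb B(\xi)=\sum_j\xi_jB_j$ for $\xi\in\mathbb R^n$, $e_1,\dots,e_n$ the standard basis. $\nu$ is the outward unit normal of $\Omega$, $N$ any $C^1$ extension of $\nu$ to a neighbourhood of $\partial\Omega$, and $L_B(x):=\sum_{j=1}^n\mathbb B(e_j)^*\mathbb B(\partial_jN(x))$ (generalized Levi matrix). *)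

From HB Require Import structures.
From mathcomp Require Import all_boot all_order all_algebra.
From mathcomp Require Import all_classical all_reals all_analysis.
From mathcomp Require Import complex.

Set Implicit Arguments.
Unset Strict Implicit.
Unset Printing Implicit Defensive.

Import Order.TTheory GRing.Theory Num.Theory.
Import numFieldNormedType.Exports.
Local Open Scope classical_set_scope.
Local Open Scope ring_scope.

Section Geometry.
Variables (R : realType) (n : nat).
Local Notation vec := 'rV[R]_n.

Definition stdb (i : 'I_n) : vec := delta_mx 0 i.

Definition rdot (v w : vec) : R := (v *m w^T) 0 0.
Definition enorm (v : vec) : R := Num.sqrt (rdot v v).

Definition bdry (A : set vec) : set vec := closure A `\` interior A.

Definition grad (f : vec -> R) (y : vec) : vec := \row_i derive f y (stdb i).

Definition C1_on (W : normedModType R) (U : set vec) (f : vec -> W) : Prop :=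
  (forall y, U y -> differentiable f y) /\
  (forall v : vec, {within U, continuous (fun y => 'd f y v)}).

Definition C2_on (U : set vec) (f : vec -> R) : Prop :=
  C1_on U f /\ (forall v : vec, C1_on U (fun y => 'd f y v)).

Definition local_defining_function (Om : set vec) (p : vec) (r : R)
    (rho : vec -> R) : Prop :=
  0 < r /\ C2_on (ball p r) rho /\
  (forall y, ball p r y -> (Om y <-> rho y < 0)) /\
  (forall y, ball p r y -> rho y = 0 -> grad rho y != 0).

Definition C2_domain (Om : set vec) : Prop :=
  open Om /\
  forall p, bdry Om p -> exists r rho, local_defining_function Om p r rho.

Definition outward_unit_normal (Om : set vec) (nu : vec -> vec) : Prop :=
  forall p, bdry Om p -> forall r rho, local_defining_function Om p r rho ->
    nu p = (enorm (grad rho p))^-1 *: grad rho p.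

Definition C1_extension (Om : set vec) (nu N : vec -> vec) : Prop :=
  exists V : set vec, open V /\ bdry Om `<=` V /\ C1_on V N /\
    (forall p, bdry Om p -> N p = nu p).

(** the derivative of nu (a function on the boundary) at x in the tangent
    direction v equals w: computed along a curve in the boundary *)
Definition bdry_dir_deriv (Om : set vec) (nu : vec -> vec) (x v w : vec) : Prop :=
  exists (gam : R -> vec) (d : R), 0 < d /\
    (forall t, `|t| < d -> bdry Om (gam t)) /\ gam 0 = x /\
    derivable gam 0 1 /\ derive gam 0 1 = v /\
    derivable (nu \o gam) 0 1 /\ derive (nu \o gam) 0 1 = w.

Definition principal_frame (Om : set vec) (nu : vec -> vec) (x : vec)
    (e : 'I_n.-1 -> vec) (kappa : 'I_n.-1 -> R) : Prop :=
  (forall j k, rdot (e j) (e k) = (j == k)%:R) /\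
  (forall j, rdot (e j) (nu x) = 0) /\
  (forall j, bdry_dir_deriv Om nu x (e j) (kappa j *: e j)).

End Geometry.

Section Algebra.
(** Scalars K (R or C), embedding of reals, conjugation, real part.
    F = K^p, E = K^m with the standard inner product Re (u^* v). *)
Variables (R : realType) (K : pzRingType) (emb : R -> K) (cj : K -> K)
  (re : K -> R).

Definition adj (m p : nat) (A : 'M[K]_(m, p)) : 'M[K]_(p, m) := (map_mx cj A)^T.

Definition ip (p : nat) (u w : 'cV[K]_p) : R := re ((adj u *m w) 0 0).

Definition sqn (p : nat) (u : 'cV[K]_p) : R := ip u u.

Definition BB (n m p : nat) (B : 'I_n -> 'M[K]_(m, p)) (xi : 'rV[R]_n) :
    'M[K]_(m, p) := \sum_(j < n) emb (xi 0 j) *: B j.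

Definition LeviB (n m p : nat) (B : 'I_n -> 'M[K]_(m, p))
    (N : 'rV[R]_n -> 'rV[R]_n) (x : 'rV[R]_n) : 'M[K]_p :=
  \sum_(j < n) adj (BB B (stdb R j)) *m BB B (derive N x (stdb R j)).

Definition levi_identity (n : nat) (nu N : 'rV[R]_n -> 'rV[R]_n) (x : 'rV[R]_n)
    (e : 'I_n.-1 -> 'rV[R]_n) (kappa : 'I_n.-1 -> R) : Prop :=
  forall (m p : nat) (B : 'I_n -> 'M[K]_(m, p)) (u : 'cV[K]_p),
    BB B (nu x) *m u = 0 ->
    ip u (LeviB B N x *m u) = \sum_(j < n.-1) kappa j * sqn (BB B (e j) *m u).

End Algebra.

From Pilot Require Import Defs.
From HB Require Import structures.
From mathcomp Require Import all_boot all_order all_algebra.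
From mathcomp Require Import all_classical all_reals all_analysis.
From mathcomp Require Import complex.
Import Order.TTheory GRing.Theory Num.Theory.
Import numFieldNormedType.Exports.
Local Open Scope classical_set_scope.
Local Open Scope ring_scope.

(* Since N = nu on the boundary, dN(x) agrees with the shape operator on the
   tangent space, so dN(x) e_j = kappa_j e_j.  The Levi matrix evaluated at u is
   the trace of the bilinear form Psi(v, w) = <B(v) u, B(dN(x) w) u>, and a trace
   can be computed in any orthonormal basis; in the basis
   nu(x), e_1, ..., e_(n-1) the normal term vanishes because B(nu(x)) u = 0. *)

Section Orthonormal.
Variables (R : realType) (n : nat).
Local Notation vec := 'rV[R]_n.
Implicit Types v w : vec.

Definition orthonormal {I : finType} (b : I -> vec) : Prop :=
  forall i j, rdot (b i) (b j) = (i == j)%:R.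

Lemma rdotE v w : rdot v w = \sum_j v 0 j * w 0 j.
Proof. by rewrite /rdot mxE; apply: eq_bigr => j _; rewrite mxE. Qed.

Lemma rdotC v w : rdot v w = rdot w v.
Proof. by rewrite !rdotE; apply: eq_bigr => j _; rewrite mulrC. Qed.

Lemma rdotZl a v w : rdot (a *: v) w = a * rdot v w.
Proof. by rewrite !rdotE mulr_sumr; apply: eq_bigr => j _; rewrite mxE mulrA. Qed.

Lemma rdotZr a v w : rdot v (a *: w) = a * rdot v w.
Proof. by rewrite rdotC rdotZl rdotC. Qed.

Lemma rdot_gt0 v : v != 0 -> 0 < rdot v v.
Proof.
move=> v_neq0; have sq_ge0 j : 0 <= v 0 j * v 0 j by rewrite -expr2 sqr_ge0.
rewrite lt_def rdotE sumr_ge0 // andbT; apply: contra v_neq0 => /eqP v_sq0.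
apply/eqP/rowP => j; rewrite mxE; apply/eqP; rewrite -sqrf_eq0 expr2.
by apply/eqP; apply: (psumr_eq0P (fun j _ => sq_ge0 j) v_sq0).
Qed.

Lemma rdot_normalized v : v != 0 ->
  rdot ((enorm v)^-1 *: v) ((enorm v)^-1 *: v) = 1.
Proof.
move=> /rdot_gt0 v_pos; rewrite rdotZl rdotZr mulrA -expr2 exprVn.
by rewrite sqr_sqrtr ?ltW // mulVf ?gt_eqF.
Qed.

Definition cons_frame {k : nat} (v0 : vec) (e : 'I_k -> vec) (i : 'I_k.+1) :=
  if unlift ord0 i is Some j then e j else v0.

Lemma orthonormal_cons_frame k (v0 : vec) (e : 'I_k -> vec) :
  rdot v0 v0 = 1 -> orthonormal e -> (forall j, rdot (e j) v0 = 0) ->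
  orthonormal (cons_frame v0 e).
Proof.
move=> v0_unit e_on e_v0 i j; rewrite /cons_frame.
case: unliftP => [i' ->|->]; case: unliftP => [j' ->|->].
all: rewrite ?liftK ?unlift_none.
- by rewrite e_on (inj_eq lift_inj).
- by rewrite e_v0 eq_sym (negbTE (neq_lift _ _)).
- by rewrite rdotC e_v0 (negbTE (neq_lift _ _)).
- by rewrite v0_unit eqxx.
Qed.
End Orthonormal.
Arguments orthonormal {R n I}.
Arguments cons_frame {R n k}.

Section TraceForm.
Variables (R : realType) (n : nat).
Local Notation vec := 'rV[R]_n.

Lemma linear_stdb_expand {g : vec -> R} :
  (forall a v w, g (a *: v + w) = a * g v + g w) ->
  forall v, g v = \sum_i v 0 i * g (stdb R i).
Proof.
move=> g_lin v.
have g0 : g 0 = 0.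
  have := g_lin 1 0 0; rewrite scaler0 addr0 mul1r => g0_twice.
  by apply/(addrI (g 0)); rewrite addr0 -g0_twice.
have gD : {morph g : x y / x + y}.
  by move=> x y; rewrite -[x]scale1r g_lin mul1r scale1r.
rewrite {1}(row_sum_delta v) (big_morph g gD g0); apply: eq_bigr => i _.
by rewrite -[_ *: _]addr0 g_lin g0 addr0.
Qed.

Variable Psi : vec -> vec -> R.
Hypotheses
  (Psi_linl : forall a v1 v2 w, Psi (a *: v1 + v2) w = a * Psi v1 w + Psi v2 w)
  (Psi_linr : forall a v w1 w2, Psi v (a *: w1 + w2) = a * Psi v w1 + Psi v w2).

Lemma form_stdb_expand v w :
  Psi v w = \sum_a \sum_b (v 0 a * w 0 b) * Psi (stdb R a) (stdb R b).
Proof.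
rewrite (linear_stdb_expand (fun a v1 v2 => Psi_linl a v1 v2 w) v).
apply: eq_bigr => a _.
rewrite (linear_stdb_expand (fun a => Psi_linr a _) w) mulr_sumr.
by apply: eq_bigr => b _; rewrite mulrA.
Qed.

Lemma orthonormal_trace_form (b : 'I_n -> vec) : orthonormal b ->
  \sum_k Psi (b k) (b k) = \sum_a Psi (stdb R a) (stdb R a).
Proof.
move=> b_on; pose Q : 'M[R]_n := \matrix_(k, j) b k 0 j.
have QtQ : Q^T *m Q = 1%:M.
  apply: mulmx1C; apply/matrixP => i j.
  rewrite [RHS]mxE -b_on rdotE mxE.
  by apply: eq_bigr => l _; rewrite !mxE.
have columns_on a c : \sum_k b k 0 a * b k 0 c = (a == c)%:R.
  have := congr1 (fun M : 'M[R]_n => M a c) QtQ; rewrite !mxE => <-.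
  by apply: eq_bigr => k _; rewrite !mxE.
under eq_bigr do rewrite form_stdb_expand.
rewrite exchange_big; apply: eq_bigr => a _; rewrite exchange_big /=.
under eq_bigr do rewrite -mulr_suml columns_on.
rewrite (bigD1 a) //= eqxx mul1r big1 ?addr0 // => c c_neq_a.
by rewrite eq_sym (negbTE c_neq_a) mul0r.
Qed.
End TraceForm.

Section Geometry.
Context {R : realType} {n : nat}.
Local Notation vec := 'rV[R]_n.

Lemma local_defining_function_bdry_eq0 (Om : set vec) p r rho :
  local_defining_function Om p r rho -> bdry Om p -> rho p = 0.
Proof.
move=> [r0 [[[rho_diff _] _] [Om_rho _]]] [p_cl p_int].
have rho_cvg : rho y @[y --> p] --> rho p.
  exact/differentiable_continuous/rho_diff/ballxx.
have near_ball : \forall y \near p, ball p r y := nbhsx_ballx p r r0.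
case: (ltgtP (rho p) 0) => [rho_neg|rho_pos|//].
  exfalso; apply: p_int; near=> y.
  apply/(Om_rho y); first by near: y.
  by near: y; exact: cvgr_lt _ rho_cvg _ rho_neg.
have near_pos : \forall y \near p, 0 < rho y.
  exact: cvgr_gt _ rho_cvg _ rho_pos.
have [y [Om_y [ball_y rho_y]]] := p_cl _ (filterI near_ball near_pos).
by move: ((Om_rho y ball_y).1 Om_y); rewrite ltNge ltW.
Unshelve. all: by end_near.
Qed.

Lemma outward_unit_normal_neq0 (Om : set vec) nu p :
  C2_domain Om -> outward_unit_normal Om nu -> bdry Om p -> nu p != 0.
Proof.
move=> [_ Om_local] nu_def p_bdry.
have [r [rho rho_def]] := Om_local p p_bdry.
have grad_neq0 : grad rho p != 0.
  case: (rho_def) => r_pos [_ [_ grad_nz]]; apply: grad_nz; first exact: ballxx.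
  exact: local_defining_function_bdry_eq0 rho_def p_bdry.
rewrite (nu_def p p_bdry r rho rho_def) scaler_eq0 negb_or grad_neq0 andbT.
by rewrite invr_eq0 /enorm sqrtr_eq0 -ltNge rdot_gt0.
Qed.

Lemma C1_extension_differentiable {Om : set vec} {nu N p} :
  C1_extension Om nu N -> bdry Om p -> differentiable N p.
Proof. by move=> [V [_ [bdry_V [[N_diff _] _]]]] /bdry_V /N_diff. Qed.

(* The curve stays in the boundary, where N = nu, so the chain rule for N along it
   computes the boundary derivative of nu. *)
Lemma C1_extension_bdry_dir_deriv (Om : set vec) nu N p v w :
  C1_extension Om nu N -> bdry Om p -> bdry_dir_deriv Om nu p v w -> 'd N p v = w.
Proof.
move=> N_ext p_bdry [gam [d [d_pos [gam_bdry [gam0 [gam_der [gam_v [_ nu_gam]]]]]]]].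
have [_ [_ [_ [_ N_nu]]]] := N_ext.
have gam_diff : differentiable gam 0 by apply/derivable1_diffP.
have N_gam_diff : differentiable N (gam 0).
  by rewrite gam0; exact: C1_extension_differentiable N_ext p_bdry.
rewrite -nu_gam (@near_eq_derive _ _ _ _ (N \o gam)); last first.
  near=> t => /=; rewrite N_nu //; apply: gam_bdry.
  by near: t; exact: (@nbhs0_lt R R d d_pos).
have chain : 'd (N \o gam) 0 = 'd N (gam 0) \o 'd gam 0 :> (R -> vec).
  exact: diff_comp.
rewrite (deriveE _ (differentiable_comp gam_diff N_gam_diff)) chain /=.
by rewrite -(deriveE _ gam_diff) gam_v gam0.
Unshelve. all: by end_near.
Qed.
End Geometry.

Section Scalars.
Variables (R : realType) (K : comPzRingType) (emb : R -> K) (cj : K -> K)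
  (re : K -> R).
Hypotheses (embD : forall a b, emb (a + b) = emb a + emb b)
  (embM : forall a b, emb (a * b) = emb a * emb b)
  (cjD : forall z w, cj (z + w) = cj z + cj w)
  (cjM : forall z w, cj (z * w) = cj z * cj w)
  (cj_emb : forall a, cj (emb a) = emb a)
  (reD : forall z w, re (z + w) = re z + re w)
  (re_embM : forall a z, re (emb a * z) = a * re z).

Local Notation adj := (adj cj).
Local Notation ip := (ip cj re).
Local Notation BB := (BB emb).

Lemma emb0 : emb 0 = 0.
Proof. by apply/(addrI (emb 0)); rewrite -embD !addr0. Qed.

Lemma cj0 : cj 0 = 0.
Proof. by apply/(addrI (cj 0)); rewrite -cjD !addr0. Qed.

Lemma re0 : re 0 = 0.
Proof. by apply/(addrI (re 0)); rewrite -reD !addr0. Qed.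

Lemma adjM m p q (A : 'M[K]_(m, p)) (B : 'M[K]_(p, q)) :
  adj (A *m B) = adj B *m adj A.
Proof.
apply/matrixP => i j; rewrite !mxE (big_morph cj cjD cj0).
by apply: eq_bigr => k _; rewrite !mxE cjM mulrC.
Qed.

Lemma adjD m p (A B : 'M[K]_(m, p)) : adj (A + B) = adj A + adj B.
Proof. by apply/matrixP => i j; rewrite !mxE cjD. Qed.

Lemma adjZ m p a (A : 'M[K]_(m, p)) : adj (emb a *: A) = emb a *: adj A.
Proof. by apply/matrixP => i j; rewrite !mxE cjM cj_emb. Qed.

Lemma adj0 m p : adj (0 : 'M[K]_(m, p)) = 0.
Proof. by apply/matrixP => i j; rewrite !mxE cj0. Qed.

Section InnerProduct.
Variable p : nat.
Implicit Types X Y Z : 'cV[K]_p.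

Lemma ipDl X Y Z : ip (X + Y) Z = ip X Z + ip Y Z.
Proof. by rewrite /ip adjD mulmxDl mxE reD. Qed.

Lemma ipDr X Y Z : ip Z (X + Y) = ip Z X + ip Z Y.
Proof. by rewrite /ip mulmxDr mxE reD. Qed.

Lemma ipZl a X Z : ip (emb a *: X) Z = a * ip X Z.
Proof. by rewrite /ip adjZ -scalemxAl mxE re_embM. Qed.

Lemma ipZr a X Z : ip Z (emb a *: X) = a * ip Z X.
Proof. by rewrite /ip -scalemxAr mxE re_embM. Qed.

Lemma ip0l Z : ip 0 Z = 0.
Proof. by rewrite /ip adj0 mul0mx mxE re0. Qed.

Lemma ip0r Z : ip Z 0 = 0.
Proof. by rewrite /ip mulmx0 mxE re0. Qed.
End InnerProduct.

Section Symbol.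
Variables (n m p : nat) (B : 'I_n -> 'M[K]_(m, p)).

Lemma BB_lin a (v w : 'rV[R]_n) : BB B (a *: v + w) = emb a *: BB B v + BB B w.
Proof.
rewrite /Defs.BB scaler_sumr -big_split; apply: eq_bigr => j _ /=.
by rewrite !mxE embD embM scalerDl scalerA.
Qed.

Lemma BB0 : BB B 0 = 0.
Proof. by rewrite /Defs.BB big1 // => j _; rewrite mxE emb0 scale0r. Qed.

Lemma BBZ a (v : 'rV[R]_n) : BB B (a *: v) = emb a *: BB B v.
Proof. by rewrite -[a *: v]addr0 BB_lin BB0 addr0. Qed.
End Symbol.

Lemma levi_trace_eigenframe n (nu0 : 'rV[R]_n)
    (f : {linear 'rV[R]_n -> 'rV[R]_n})
    (e : 'I_n.-1 -> 'rV[R]_n) (kappa : 'I_n.-1 -> R) :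
  nu0 != 0 -> orthonormal e -> (forall j, rdot (e j) nu0 = 0) ->
  (forall j, f (e j) = kappa j *: e j) ->
  forall m p (B : 'I_n -> 'M[K]_(m, p)) (u : 'cV[K]_p), BB B nu0 *m u = 0 ->
  ip u ((\sum_(j < n) adj (BB B (stdb R j)) *m BB B (f (stdb R j))) *m u)
    = \sum_(j < n.-1) kappa j * sqn cj re (BB B (e j) *m u).
Proof.
case: n => [|k] in nu0 f e kappa *.
  by move=> /negP[]; apply/eqP/rowP => -[].
move=> nu0_neq0 e_on e_nu0 f_e m p B u B_nu0.
pose Psi v w := ip (BB B v *m u) (BB B (f w) *m u).
have -> : ip u ((\sum_j adj (BB B (stdb R j)) *m BB B (f (stdb R j))) *m u)
    = \sum_j Psi (stdb R j) (stdb R j).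
  rewrite mulmx_suml (big_morph (ip u) (fun X Y => ipDr _ X Y u) (ip0r _ u)).
  by apply: eq_bigr => j _; rewrite /Psi /Defs.ip -!mulmxA mulmxA -adjM.
pose nu1 := (enorm nu0)^-1 *: nu0.
have frame_on : orthonormal (cons_frame nu1 e).
  apply: orthonormal_cons_frame; [exact: rdot_normalized | exact: e_on |].
  by move=> j; rewrite /nu1 rdotZr e_nu0 mulr0.
rewrite -(@orthonormal_trace_form _ _ Psi _ _ _ frame_on); first last.
- move=> a v w1 w2; rewrite /Psi linearP BB_lin mulmxDl -scalemxAl.
  by rewrite ipDr ipZr.
- by move=> a v1 v2 w; rewrite /Psi BB_lin mulmxDl -scalemxAl ipDl ipZl.
rewrite big_ord_recl /cons_frame unlift_none {1}/Psi BBZ -scalemxAl B_nu0.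
rewrite scaler0 ip0l add0r; apply: eq_bigr => j _.
by rewrite liftK /Psi f_e BBZ -scalemxAl ipZr.
Qed.

Lemma levi_identity_principal_frame n (Om : set 'rV[R]_n)
    (nu N : 'rV[R]_n -> 'rV[R]_n) x
    (e : 'I_n.-1 -> 'rV[R]_n) (kappa : 'I_n.-1 -> R) :
  C2_domain Om -> outward_unit_normal Om nu -> C1_extension Om nu N ->
  bdry Om x -> principal_frame Om nu x e kappa ->
  levi_identity emb cj re nu N x e kappa.
Proof.
move=> Om_C2 nu_normal N_ext x_bdry [e_on [e_nu e_curv]] m p B u B_nu.
have N_diff := C1_extension_differentiable N_ext x_bdry.
rewrite /LeviB.
under eq_bigr do rewrite (deriveE _ N_diff).
apply: levi_trace_eigenframe B_nu => //.
- exact: outward_unit_normal_neq0 Om_C2 nu_normal x_bdry.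
- by move=> j; exact: C1_extension_bdry_dir_deriv N_ext x_bdry (e_curv j).
Qed.
End Scalars.

Theorem mainTheorem7 (R : realType) (n : nat) (Om : set 'rV[R]_n)
  (nu N : 'rV[R]_n -> 'rV[R]_n) (x : 'rV[R]_n)
  (e : 'I_n.-1 -> 'rV[R]_n) (kappa : 'I_n.-1 -> R) :
  C2_domain Om -> outward_unit_normal Om nu -> C1_extension Om nu N ->
  bdry Om x -> principal_frame Om nu x e kappa ->
  (* real inner product spaces *)
  levi_identity (K := R) (fun r : R => r) (fun r : R => r) (fun r : R => r) nu N x e kappa /\
  (* complex inner product spaces, <.,.> = real part of the inner product *)
  levi_identity (K := complex.complex R) (fun r : R => complex.Complex r 0) (@complex.conjc R) (@complex.Re R)
    nu N x e kappa.
Proof.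
move=> Om_C2 nu_normal N_ext x_bdry frame; split.
  exact: levi_identity_principal_frame frame.
apply: levi_identity_principal_frame frame => //.
- exact: rmorphD (real_complex R).
- exact: rmorphM (real_complex R).
- exact: rmorphD conjc.
- exact: rmorphM conjc.
- exact: conjc_real.
- by move=> [a1 b1] [a2 b2].
- by move=> a [z1 z2] /=; rewrite mul0r subr0.
Qed.
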